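(* Let $f_i$ and $f_j$ be IID cluster finite set densities on finite subsets of $\mathbb{R}^d$ with cardinality pmfs $p_i,p_j$ on $\{0,1,2,\ldots\}$ and single-object localisation densities $\rho_i,\rho_j$ on $\mathbb{R}^d$, and let $\omega\in[0,1]$. Let $z_\omega=\int_{\mathbb{R}^d}\rho_i^{(1-\omega)}(x)\rho_j^{\omega}(x)\,\mathrm{d}x$, $$N_\omega=\sum_{n'=0}^\infty p_i^{(1-\omega)}(n')\,p_j^{\omega}(n')\,z_\omega^{n'},\qquad p_\omega(n)=\frac{1}{N_\omega}p_i^{(1-\omega)}(n)\,p_j^{\omega}(n)\,z_\omega^{n}.$$ Then for any number of objects $n\ge1$ with $p_i(n)\neq0$ and $p_j(n)\neq0$, the fused cardinality satisfies $p_\omega(n)<\min\{p_i(n),p_j(n)\}$ if $z_\omega<\mathcal{I}_{\omega,n}$, where $$\mathcal{I}_{\omega,n}=\left(N_\omega\frac{\min\{p_i(n),p_j(n)\}}{p_i^{(1-\omega)}(n)\,p_j^{\omega}(n)}\right)^{1/n}.$$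
   Context: An IID cluster finite set density with cardinality pmf $p$ and (probability) density $\rho$ on $\mathbb{R}^d$ is $f(\{x_1,\ldots,x_n\})=p(n)\,n!\prod_{k=1}^n\rho(x_k)$. For two such densities, the cardinality distribution of the exponential mixture density $f_\omega\propto f_i^{1-\omega}f_j^{\omega}$ (normalised with respect to the set integral) is the pmf $p_\omega$ given in the claim. *)

From HB Require Import structures.
From mathcomp Require Import all_boot all_order all_algebra.
From mathcomp Require Import all_classical all_reals all_analysis.
Set Implicit Arguments. Unset Strict Implicit. Unset Printing Implicit Defensive.
Import Order.TTheory GRing.Theory Num.Theory numFieldNormedType.Exports.
Local Open Scope classical_set_scope.
Local Open Scope ring_scope.

(* Euclidean space R^(n+1) as an iterated product measurable space
   R^1 = R, R^(n+2) = R^(n+1) * R, with the (product) Borel sigma-algebra. *)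
Fixpoint Rsp1 (R : realType) (n : nat) : {disp : measure_display & measurableType disp} :=
  match n with
  | 0 => existT measurableType _ (measurableTypeR R)
  | n'.+1 => existT measurableType _ (projT2 (Rsp1 R n') * measurableTypeR R)%type
  end.

Definition Rd1 (R : realType) (n : nat) : measurableType (projT1 (Rsp1 R n)) :=
  projT2 (Rsp1 R n).

Fixpoint lebd1 (R : realType) (n : nat) : {measure set (Rd1 R n) -> \bar R} :=
  match n return {measure set (Rd1 R n) -> \bar R} with
  | 0 => (@lebesgue_measure R : {measure set (measurableTypeR R) -> \bar R})
  | n'.+1 =>
      (((lebd1 R n') \x (@lebesgue_measure R))%E
         : {measure set (Rd1 R n' * measurableTypeR R)%type -> \bar R})
  end.

(* R^d for d >= 1 (for d = 0 this is a junk copy of R^1; the theorem assumes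
   0 < d), and Lebesgue measure on it. *)
Definition Rd (R : realType) (d : nat) := Rd1 R d.-1.
Definition lebd (R : realType) (d : nat) : {measure set (Rd R d) -> \bar R} :=
  lebd1 R d.-1.

Definition is_density (R : realType) (d : nat) (rho : Rd R d -> R) : Prop :=
  measurable_fun setT rho /\ (forall x, 0 <= rho x) /\
  (\int[lebd R d]_x (rho x)%:E = 1)%E.

Definition is_pmf (R : realType) (p : nat -> R) : Prop :=
  (forall n, 0 <= p n) /\ series p @ \oo --> (1 : R).

Definition z_omega (R : realType) (d : nat) (rhoi rhoj : Rd R d -> R) (w : R) : R :=
  Rintegral (lebd R d) setT (fun x => rhoi x `^ (1 - w) * rhoj x `^ w).

Definition fused_term (R : realType) (pi pj : nat -> R) (w z : R) (n : nat) : R :=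
  pi n `^ (1 - w) * pj n `^ w * z ^+ n.

Definition N_omega (R : realType) (pi pj : nat -> R) (w z : R) : R :=
  limn (series (fused_term pi pj w z)).

Definition p_omega (R : realType) (d : nat) (pi pj : nat -> R)
  (rhoi rhoj : Rd R d -> R) (w : R) (n : nat) : R :=
  let z := z_omega rhoi rhoj w in
  fused_term pi pj w z n / N_omega pi pj w z.

Definition I_omega (R : realType) (d : nat) (pi pj : nat -> R)
  (rhoi rhoj : Rd R d -> R) (w : R) (n : nat) : R :=
  let z := z_omega rhoi rhoj w in
  (N_omega pi pj w z * Num.min (pi n) (pj n) / (pi n `^ (1 - w) * pj n `^ w))
    `^ (n%:R)^-1.

From mathcomp Require Import all_boot all_order all_algebra.
From mathcomp Require Import all_classical all_reals all_analysis.
Import Order.TTheory GRing.Theory Num.Theory numFieldNormedType.Exports.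
Set Implicit Arguments.
Unset Strict Implicit.
Unset Printing Implicit Defensive.

Local Open Scope ring_scope.

(* Write a = p_i(n)^(1-w) p_j(n)^w > 0 and m = min(p_i(n), p_j(n)) > 0, so
   that p_w(n) = a z^n / N.  Since z >= 0, raising z < (N m / a)^(1/n) to the
   n-th power gives z^n < N m / a, i.e. a z^n / N < m.  When N = 0 (which also
   covers a divergent series, whose limit is 0 by convention) p_w(n) = 0 < m. *)

Section RootInequality.
Variable R : realType.

Lemma powR_invn_expr (x : R) (n : nat) :
  (0 < n)%N -> 0 <= x -> (x `^ n%:R^-1) ^+ n = x.
Proof.
move=> n_gt0 x_ge0; rewrite -powR_mulrn ?powR_ge0 // -powRrM mulVf ?powRr1 //.
by rewrite pnatr_eq0 -lt0n.
Qed.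

Lemma ltr_powR_invn (z x : R) (n : nat) :
  (0 < n)%N -> 0 <= z -> 0 <= x -> z < x `^ n%:R^-1 -> z ^+ n < x.
Proof.
move=> n_gt0 z_ge0 x_ge0 lt_z_root.
by rewrite -(powR_invn_expr n_gt0 x_ge0) ltrXn2r // -lt0n.
Qed.

Lemma ltr_div_of_root (a m N z : R) (n : nat) :
  (0 < n)%N -> 0 < a -> 0 < m -> 0 <= N -> 0 <= z ->
  z < (N * m / a) `^ n%:R^-1 -> a * z ^+ n / N < m.
Proof.
move=> n_gt0 a_gt0 m_gt0 N_ge0 z_ge0.
have [-> _|N_neq0] := eqVneq N 0; first by rewrite invr0 mulr0.
have N_gt0 : 0 < N by rewrite lt_def N_neq0 N_ge0.
move=> /ltr_powR_invn-/(_ n_gt0 z_ge0); rewrite divr_ge0 ?mulr_ge0 ?ltW //.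
by move=> /(_ isT); rewrite ltr_pdivlMr // ltr_pdivrMr // mulrC (mulrC m).
Qed.

Lemma limn_series_ge0 (u : nat -> R) :
  (forall k, 0 <= u k) -> 0 <= limn (series u).
Proof.
move=> u_ge0; have [cvg_u|/dvgP->//] := pselect (cvgn (series u)).
by apply: limr_ge => //; apply: nearW => k; apply: sumr_ge0.
Qed.

End RootInequality.

Lemma z_omega_ge0 (R : realType) (d : nat) (rhoi rhoj : Rd R d -> R) (w : R) :
  0 <= z_omega rhoi rhoj w.
Proof. by apply: Rintegral_ge0 => x _; rewrite mulr_ge0 ?powR_ge0. Qed.

Lemma N_omega_ge0 (R : realType) (pi pj : nat -> R) (w z : R) :
  0 <= z -> 0 <= N_omega pi pj w z.
Proof.
move=> z_ge0; apply: limn_series_ge0 => k.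
by rewrite !mulr_ge0 ?powR_ge0 ?exprn_ge0.
Qed.

Theorem corollary2 (R : realType) (d : nat) (hd : (0 < d)%N)
  (pi pj : nat -> R) (rhoi rhoj : Rd R d -> R) (w : R) :
  is_pmf pi -> is_pmf pj ->
  is_density rhoi -> is_density rhoj ->
  0 <= w <= 1 ->
  forall n : nat, (1 <= n)%N ->
  pi n != 0 -> pj n != 0 ->
  z_omega rhoi rhoj w < I_omega pi pj rhoi rhoj w n ->
  p_omega pi pj rhoi rhoj w n < Num.min (pi n) (pj n).
Proof.
move=> [pi_ge0 _] [pj_ge0 _] _ _ _ n n_gt0 pin_neq0 pjn_neq0.
have pin_gt0 : 0 < pi n by rewrite lt_def pin_neq0 pi_ge0.
have pjn_gt0 : 0 < pj n by rewrite lt_def pjn_neq0 pj_ge0.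
apply: ltr_div_of_root => //.
- by rewrite mulr_gt0 ?powR_gt0.
- by rewrite lt_min pin_gt0 pjn_gt0.
- exact/N_omega_ge0/z_omega_ge0.
- exact: z_omega_ge0.
Qed.
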